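(* Let $F$ be a closed $\mathfrak{sl}_N$-foam and let $c,c'$ be two colorings of $F$ related by a Kempe move relative to the pigments $1$ and $2$. Then for every pigment $k\ge 3$, $$\theta^+_{1k}(F,c)+\theta^+_{2k}(F,c)\equiv\theta^+_{1k}(F,c')+\theta^+_{2k}(F,c')\pmod 2.$$
   Context: Fix $N\ge1$, pigments $\mathbb{P}=\{1,\dots,N\}$ with natural order. An $\mathfrak{sl}_N$-foam is obtained by gluing along their boundaries finitely many facets (compact connected oriented surfaces with boundary) labelled by $\{0,\dots,N\}$, locally modelled on: a disc in a facet; three facets labelled $a,b,a+b$ meeting along an oriented arc (a binding), whose orientation agrees with the boundary orientation of the facets labelled $a,b$ and disagrees with that of the facet labelled $a+b$, and which carries a cyclic ordering of its three facets; or a singular point (cone over the 1-skeleton of a tetrahedron) where six facets labelled $a,b,c,a+b,b+c,a+b+c$ meet along four bindings, with compatible cyclic orderings. Closed means compact without boundary. A coloring $c$ assigns to each facet $f$ a subset $c(f)\subseteq\mathbb{P}$ of cardinality the label of $f$, such that at each binding with facets labelled $a,b,a+b$ the colors of the first two have union equal to the color of the third. $F_i(c)$ is the closed surface formed by the facets whose color contains $i$; $F_{ij}(c)$ is the closed surface formed by facets whose color contains exactly one of $i,j$. For $i<j$, a binding with facets $f_1,f_2,f_3$ with $i\in c(f_1)$, $j\in c(f_2)$, $\{i,j\}\subseteq c(f_3)$ is positive w.r.t. $(i,j)$ if its cyclic order is $(f_1,f_2,f_3)$ and negative otherwise; $F_i(c)\cap F_j(c)\cap F_{ij}(c)$ is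 a disjoint union of circles each consisting entirely of positive or entirely of negative bindings; $\theta^+_{ij}(F,c)$ denotes the number of positive such circles. A Kempe move relative to $i$ and $j$ along $\Sigma$: given a coloring $c$ and a closed subsurface $\Sigma$ of $F_{ij}(c)$ (a union of connected components), the coloring $c'$ is obtained from $c$ by exchanging the pigments $i$ and $j$ in the colors of all facets contained in $\Sigma$ (and leaving all other facets unchanged). *)

From mathcomp Require Import all_boot.
Set Implicit Arguments. Unset Strict Implicit. Unset Printing Implicit Defensive.

(* Pigments {1,...,N} are represented by 'I_N : pigment p <-> ordinal p-1
   (natural order preserved). *)

(* Combinatorial data of a closed foam:
   - facets, bindings, singular vertices are finite types;
   - lab f : label of facet f;
   - bfac b : the three facets around binding b, listed in the cyclic order
     (bfac b 0, bfac b 1, bfac b 2) carried by b; bfac b 2 is the facet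
     labelled a+b, bfac b 0 and bfac b 1 are those labelled a, b;
   - isarc b : b is an arc ending at singular points (otherwise b is a
     closed circle without singular points);
   - an arc binding b has two ends (b,false) (its tail, the binding being
     oriented from (b,false) to (b,true)) and (b,true) (its head);
   - vend v p (p : 'I_4) : the binding end at position p of the singular
     point v;  vfac v q (q : 'I_6) : the facets a,b,c,a+b,b+c,a+b+c at v
     (indices 0..5);  vchir v : which of the two mirror local models. *)
Record foam (Facet Binding Vertex : finType) := Foam {
  lab : Facet -> nat;
  bfac : Binding -> 'I_3 -> Facet;
  isarc : Binding -> bool;
  vend : Vertex -> 'I_4 -> Binding * bool;
  vfac : Vertex -> 'I_6 -> Facet;
  vchir : Vertex -> bool
}.

Section Foams.
Variables (Facet Binding Vertex : finType) (F : foam Facet Binding Vertex).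

Definition i3 (n : nat) : 'I_3 := inord n.
Definition i6 (n : nat) : 'I_6 := inord n.

(* Local model at a singular point (cone over the tetrahedron 1-skeleton):
   the four bindings are (a,b,a+b), (a+b,c,a+b+c), (b,c,b+c), (a,b+c,a+b+c),
   with compatible cyclic orders: all as listed, or all mirrored (first two
   entries swapped). *)
Definition model_triple (p : 'I_4) : nat * nat * nat :=
  match val p with
  | 0 => (0, 1, 3)
  | 1 => (3, 2, 5)
  | 2 => (1, 2, 4)
  | _ => (0, 4, 5)
  end%N.

Definition vertex_ok (v : Vertex) : bool :=
  [forall p : 'I_4,
    let: (x, y, z) := model_triple p in
    let: (b, _) := vend F v p in
    let: (x', y') := if vchir F v then (x, y) else (y, x) in
    [forall t : 'I_3,
      bfac F b t == vfac F v (i6 (if val t == 0 then x' else if val t == 1 then y' else z))]]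
  (* orientations: bindings at positions 0,1 point the same way (both out of
     or both into v), those at positions 2,3 the opposite way. *)
  && ((vend F v (inord 0)).2 == (vend F v (inord 1)).2)
  && ((vend F v (inord 2)).2 == (vend F v (inord 3)).2)
  && ((vend F v (inord 0)).2 != (vend F v (inord 2)).2).

Definition closed_foam (N : nat) : Prop :=
  (forall f, lab F f <= N)
  /\ (forall b, lab F (bfac F b (i3 2)) = lab F (bfac F b (i3 0)) + lab F (bfac F b (i3 1)))
  (* every end of an arc is attached at exactly one position of one singular
     point; circles have no ends *)
  /\ (forall b s, #|[set vp : Vertex * 'I_4 | vend F vp.1 vp.2 == (b, s)]| = nat_of_bool (isarc F b))
  /\ (forall v, vertex_ok v).

Variable N : nat.
Implicit Types (c : Facet -> {set 'I_N}) (i j : 'I_N).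

Definition coloring c : Prop :=
  (forall f, #|c f| = lab F f)
  /\ (forall b, c (bfac F b (i3 0)) :|: c (bfac F b (i3 1)) = c (bfac F b (i3 2))).

Definition inFij c i j (f : Facet) : bool := (i \in c f) != (j \in c f).

Definition fadj c i j (f g : Facet) : bool :=
  inFij c i j f && inFij c i j g &&
  [exists b, [exists p, [exists q, (bfac F b p == f) && (bfac F b q == g)]]].

(* S is (the set of facets of) a closed subsurface of F_ij(c), i.e. a union of
   connected components *)
Definition closed_subsurface c i j (S : {set Facet}) : Prop :=
  (forall f, f \in S -> inFij c i j f)
  /\ (forall f g, fadj c i j f g -> (f \in S) = (g \in S)).

Definition swp i j (x : 'I_N) : 'I_N := if x == i then j else if x == j then i else x.

Definition swap_color i j (A : {set 'I_N}) : {set 'I_N} := [set x | swp i j x \in A].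

Definition kempe_move i j c c' : Prop :=
  exists S : {set Facet}, closed_subsurface c i j S /\
    forall f, c' f = if f \in S then swap_color i j (c f) else c f.

(* binding b lies in F_i(c) /\ F_j(c) /\ F_ij(c) *)
Definition ijbind c i j (b : Binding) : bool :=
  ((i \in c (bfac F b (i3 0))) && (j \in c (bfac F b (i3 1))))
  || ((j \in c (bfac F b (i3 0))) && (i \in c (bfac F b (i3 1)))).

(* positive w.r.t. (i,j): cyclic order (f_i, f_j, f_3) *)
Definition posbind c i j (b : Binding) : bool :=
  (i \in c (bfac F b (i3 0))) && (j \in c (bfac F b (i3 1))).

Definition badj c i j (b b' : Binding) : bool :=
  ijbind c i j b && ijbind c i j b' &&
  [exists v, [exists p, [exists q, ((vend F v p).1 == b) && ((vend F v q).1 == b')]]].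

(* theta^+_ij(F,c): number of circles (connected components) of
   F_i /\ F_j /\ F_ij made of positive bindings *)
Definition theta_pos c i j : nat :=
  #|[set [set b' | connect (badj c i j) b b'] | b in [set b | posbind c i j b]]|.

End Foams.

(* Record each binding b together with a bit l choosing the pigment 1 or 2, and let sigma_c be the
   permutation of these pairs that sends a pair whose binding is positive for (l, k) to the next binding
   of its circle in F_l /\ F_k /\ F_lk and fixes the other pairs. Its cycles are the positive circles for
   (1, k) and for (2, k) together with the fixed points, so the sign of sigma_c determines the parity of
   theta+_1k + theta+_2k. Conjugating sigma_c' by the involution that flips l on the bindings touched by
   the Kempe move gives tau_h sigma_c tau_t, where tau_h and tau_t flip l on the bindings positive for both
   pigments whose head, respectively tail, is a singular point touched by the move. Ends of (1, k)-positive
   bindings at such points come in pairs twice over (at a point, and along a binding that is not positive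
   for both pigments), so tau_h and tau_t have the same sign, and so have sigma_c and sigma_c'. The facts
   needed at a singular point are checked exhaustively on its local model. *)

From mathcomp Require Import all_boot fingroup perm.
Set Implicit Arguments. Unset Strict Implicit. Unset Printing Implicit Defensive.

Section FinitePermutations.
Variable T : finType.
Implicit Types (A : {set T}) (s : {perm T}).

Lemma even_card_involution A (f : T -> T) :
  {in A, forall x, f x \in A} -> {in A, forall x, f (f x) = x} -> {in A, forall x, f x != x} ->
  ~~ odd #|A|.
Proof.
move=> fA fK fx; have [n leAn] := ubnP #|A|; elim: n => // n IHn in A leAn fA fK fx *.
have [-> | [x Ax]] := set_0Vmem A; first by rewrite cards0.
pose A' := A :\ x :\ f x.
have cardA : #|A| = #|A'|.+2.
  by rewrite (cardsD1 x) Ax (cardsD1 (f x) (A :\ x)) !inE fx // fA.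
have memA' y : y \in A' -> [/\ y \in A, y != x & y != f x] by rewrite !inE => /and3P[].
rewrite cardA /= negbK; apply: IHn.
- by move: leAn; rewrite cardA ltnS => /ltnW.
- move=> y /memA'[Ay yx yfx]; rewrite !inE fA // andbT.
  apply/andP; split; [apply: contra yx | apply: contra yfx] => /eqP fy.
    by rewrite -(fK y Ay) fy fK.
  by rewrite -(fK y Ay) fy.
- by move=> y /memA'[Ay _ _]; apply: fK.
- by move=> y /memA'[Ay _ _]; apply: fx.
Qed.

Lemma porbit_fixed s x : s x = x -> porbit s x = [set x].
Proof.
move=> sx; apply/setP => y; rewrite inE.
by apply/porbitP/eqP => [[i ->] | ->]; [rewrite permX_fix | exists 0; rewrite expg0 perm1].
Qed.

Lemma card_porbits_fixed s A :
  {in ~: A, forall x, s x = x} -> #|porbits s| = #|porbit s @: A| + #|~: A|.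
Proof.
move=> fixA.
have orbit1 x : x \in ~: A -> porbit s x = [set x] by move/fixA/porbit_fixed.
have -> : porbits s = porbit s @: A :|: porbit s @: ~: A.
  by rewrite -imsetU setUCr; apply/setP => X; apply/imsetP/imsetP => -[x _ ->]; exists x.
rewrite cardsU (card_in_imset (f := porbit s) (D := ~: A)); last first.
  by move=> x y Ax Ay; rewrite !orbit1 // => /set1_inj.
suff -> : porbit s @: A :&: porbit s @: (~: A) = set0 by rewrite cards0 subn0.
apply/setP => X; rewrite !inE; apply/andP => -[/imsetP[a Aa ->] /imsetP[x Ax ax]].
by have := porbit_id s a; rewrite ax orbit1 // inE => /eqP ax'; rewrite -ax' inE Aa in Ax.
Qed.

Definition xor_snd (g : T -> bool) (d : T * bool) : T * bool := (d.1, d.2 (+) g d.1).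

Lemma xor_sndK g : involutive (xor_snd g).
Proof. by move=> [x l]; rewrite /xor_snd /= addbK. Qed.

Definition xor_perm g : {perm T * bool} := perm (inv_inj (xor_sndK g)).

Lemma xor_permE g : xor_perm g =1 xor_snd g.
Proof. by move=> d; rewrite permE. Qed.

Lemma odd_xor_perm g : odd_perm (xor_perm g) = odd #|[set x | g x]|.
Proof.
move: {2}#|_| (erefl #|[set x | g x]|) => n; elim: n g => [|n IHn] g cardg.
  have -> : xor_perm g = 1%g.
    apply/permP => -[x l]; rewrite xor_permE perm1 /xor_snd /=.
    move/eqP: cardg; rewrite cards_eq0 => /eqP/setP/(_ x).
    by rewrite !inE => ->; rewrite addbF.
  by rewrite odd_perm1 cardg.
have [x0] : exists x0, x0 \in [set x | g x] by apply/set0Pn; rewrite -card_gt0 cardg.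
rewrite inE => gx0; pose g' x := g x && (x != x0).
have cardg' : #|[set x | g' x]| = n.
  have -> : [set x | g' x] = [set x | g x] :\ x0 by apply/setP => x; rewrite !inE andbC.
  by move: cardg; rewrite (cardsD1 x0) inE gx0 add1n => -[].
have -> : xor_perm g = (xor_perm g' * tperm (x0, false) (x0, true))%g.
  apply/permP => -[x l]; rewrite permM !xor_permE /xor_snd /= /g'.
  have [-> | nx] := eqVneq x x0.
    by rewrite /= andbF addbF gx0; case: l; rewrite permE /= !xpair_eqE eqxx.
  by rewrite /= andbT permE /= !xpair_eqE (negbTE nx).
by rewrite odd_permM IHn // odd_tperm xpair_eqE eqxx /= addbT cardg cardg'.
Qed.

End FinitePermutations.

Section LocalModel.

(* Membership of a pigment in the facets a, b, c at a singular point; it determines the membership in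
   a+b, b+c and a+b+c. *)
Definition pattern := (bool * bool * bool)%type.

Definition pattern_ok (t : pattern) : bool :=
  let: (a, b, c) := t in ~~ (a && b) && ~~ (b && c) && ~~ (a && c).

Definition pat_mem (t : pattern) (q : nat) : bool :=
  let: (a, b, c) := t in
  match q with 0 => a | 1 => b | 2 => c | 3 => a || b | 4 => b || c | _ => [|| a, b | c] end.

Definition model_facet (ch : bool) (p : 'I_4) (s : nat) : nat :=
  let: (x, y, z) := model_triple p in
  let: (x', y') := if ch then (x, y) else (y, x) in
  if s == 0 then x' else if s == 1 then y' else z.

Lemma model_facet_lt ch p s : model_facet ch p s < 6.
Proof.
by rewrite /model_facet /model_triple; case: ch; case: p => [[|[|[|[|]]]] ?]; case: s => [|[|]].
Qed.

Variable ch : bool.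
Implicit Types (ti tk : pattern) (p q : 'I_4).

Definition loc_pos ti tk p := pat_mem ti (model_facet ch p 0) && pat_mem tk (model_facet ch p 1).

Definition loc_ij ti tk p := loc_pos ti tk p || loc_pos tk ti p.

Definition loc_cross (t1 t2 : pattern) tk p :=
  [&& pat_mem t1 (model_facet ch p 0), pat_mem t2 (model_facet ch p 0) & pat_mem tk (model_facet ch p 1)].

Definition loc_inFij (t1 t2 : pattern) (q : nat) := pat_mem t1 q != pat_mem t2 q.

Definition loc_touchFij (t1 t2 : pattern) p := has (fun s => loc_inFij t1 t2 (model_facet ch p s)) (iota 0 3).

(* Explicit ordinals, so that the exhaustive checks below evaluate. *)
Definition positions : seq 'I_4 :=
  [:: @Ordinal 4 0 isT; @Ordinal 4 1 isT; @Ordinal 4 2 isT; @Ordinal 4 3 isT].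

Definition loc_partner ti tk p : 'I_4 := head p [seq q <- positions | (q != p) && loc_ij ti tk q].

Definition loc_partner_ok ti tk p :=
  loc_ij ti tk p ==>
  let q := loc_partner ti tk p in
  [&& q != p, loc_ij ti tk q, loc_partner ti tk q == p, (q < 2) != (p < 2),
      loc_pos ti tk q == loc_pos ti tk p
    & all (fun q' => loc_ij ti tk q' ==> (q' != p) ==> (q' == q)) positions].

(* [ms] marks the local facets lying in a union of components of F_ij. *)
Definition loc_Fij_connected (t1 t2 : pattern) (ms : seq bool) :=
  [&& all (fun p => all (fun s => all (fun s' =>
          [&& loc_inFij t1 t2 (model_facet ch p s), loc_inFij t1 t2 (model_facet ch p s')
            & nth false ms (model_facet ch p s)] ==> nth false ms (model_facet ch p s'))
        (iota 0 3)) (iota 0 3)) positions,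
      all (fun r : nat => nth false ms r ==> loc_inFij t1 t2 r) (iota 0 6)
    & has (nth false ms) (iota 0 6)]
  ==> all (fun r : nat => nth false ms r == loc_inFij t1 t2 r) (iota 0 6).

(* The local form of [step_kempe] at the head [p] of a binding: [moved] says that the Kempe move touches
   the singular point, [t1] and [t2] are the patterns of the exchanged pigments before the move. *)
Definition loc_step_kempe moved l (t1 t2 : pattern) tk p :=
  loc_pos (if l then t2 else t1) tk p ==>
  let swapped q := moved && loc_touchFij t1 t2 q in
  let crossed q := loc_cross t1 t2 tk q && moved in
  let l1 := l (+) crossed p in
  let q1 := loc_partner (if l1 then t2 else t1) tk p in
  let l3 := l (+) swapped p in
  let q3 := loc_partner (if l3 (+) moved then t2 else t1) tk p in
  (q1 == q3) && (l1 (+) crossed q1 (+) swapped q1 == l3).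

End LocalModel.

Definition ok_patterns : seq pattern :=
  [seq t <- [:: (false, false, false); (true, false, false); (false, true, false); (false, false, true);
     (true, true, false); (true, false, true); (false, true, true); (true, true, true)] | pattern_ok t].

Lemma mem_ok_patterns t : pattern_ok t -> t \in ok_patterns.
Proof. by case: t => [[[] []] []]. Qed.

Lemma mem_positions p : p \in positions.
Proof. by case: p => [[|[|[|[|]]]] ?]. Qed.

Fixpoint bool_seqs n : seq (seq bool) :=
  if n is n'.+1 then [seq true :: s | s <- bool_seqs n'] ++ [seq false :: s | s <- bool_seqs n']
  else [:: [::]].

Lemma mem_bool_seqs (ms : seq bool) : ms \in bool_seqs (size ms).
Proof.
by elim: ms => [|[] ms IH] //=; rewrite mem_cat; apply/orP; [left | right]; apply: map_f.
Qed.

Lemma loc_partner_check :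
  all (fun ch => all (fun ti => all (fun tk =>
    all (loc_partner_ok ch ti tk) positions) ok_patterns) ok_patterns)
    [:: true; false].
Proof. by vm_compute. Qed.

Lemma loc_Fij_connected_check :
  all (fun ch => all (fun t1 => all (fun t2 =>
    all (loc_Fij_connected ch t1 t2) (bool_seqs 6)) ok_patterns) ok_patterns)
    [:: true; false].
Proof. by vm_compute. Qed.

Lemma loc_step_kempe_check :
  all (fun ch => all (fun moved => all (fun l => all (fun t1 => all (fun t2 => all (fun tk =>
    all (loc_step_kempe ch moved l t1 t2 tk) positions) ok_patterns) ok_patterns) ok_patterns)
    [:: true; false]) [:: true; false]) [:: true; false].
Proof. by vm_compute. Qed.

Lemma mem_bools b : b \in [:: true; false].
Proof. by case: b. Qed.

Lemma loc_partnerP ch ti tk p : pattern_ok ti -> pattern_ok tk -> loc_partner_ok ch ti tk p.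
Proof.
move=> /mem_ok_patterns oki /mem_ok_patterns okk.
move: loc_partner_check => /allP/(_ ch (mem_bools ch))/allP/(_ ti oki)/allP/(_ tk okk)/allP->//.
exact: mem_positions.
Qed.

Lemma loc_Fij_connectedP ch t1 t2 ms :
  pattern_ok t1 -> pattern_ok t2 -> size ms = 6 -> loc_Fij_connected ch t1 t2 ms.
Proof.
move=> /mem_ok_patterns ok1 /mem_ok_patterns ok2 size_ms; have := mem_bool_seqs ms; rewrite size_ms => ms6.
by move: loc_Fij_connected_check => /allP/(_ ch (mem_bools ch))/allP/(_ t1 ok1)/allP/(_ t2 ok2)/allP->.
Qed.

Lemma loc_step_kempeP ch moved l t1 t2 tk p :
  pattern_ok t1 -> pattern_ok t2 -> pattern_ok tk -> loc_step_kempe ch moved l t1 t2 tk p.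
Proof.
move=> /mem_ok_patterns ok1 /mem_ok_patterns ok2 /mem_ok_patterns okk.
move: loc_step_kempe_check => /allP/(_ ch (mem_bools ch))/allP/(_ moved (mem_bools moved)).
move=> /allP/(_ l (mem_bools l)).
by move=> /allP/(_ t1 ok1)/allP/(_ t2 ok2)/allP/(_ tk okk)/allP->//; apply: mem_positions.
Qed.

Section Foam.
Variables (N : nat) (Facet Binding Vertex : finType) (F : foam Facet Binding Vertex).
Hypothesis F_closed : closed_foam F N.

Lemma i3K n : n < 3 -> val (i3 n) = n. Proof. exact: inordK. Qed.

Lemma bfac_vend v p s : bfac F (vend F v p).1 s = vfac F v (i6 (model_facet (vchir F v) p s)).
Proof.
have [_ [_ [_ /(_ v)]]] := F_closed.
move=> /andP[/andP[/andP[/forallP /(_ p) + _] _] _]; rewrite /model_facet.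
case: (model_triple p) => [[x y] z]; case: (vend F v p) => b e /=.
by case: (vchir F v) => /forallP /(_ s) /eqP.
Qed.

Lemma bfac_vend_i3 v p s :
  s < 3 -> bfac F (vend F v p).1 (i3 s) = vfac F v (i6 (model_facet (vchir F v) p s)).
Proof. by move=> s3; rewrite bfac_vend i3K. Qed.

Lemma vend_dir v (p q : 'I_4) : (p < 2) != (q < 2) -> (vend F v p).2 != (vend F v q).2.
Proof.
have [_ [_ [_ /(_ v)]]] := F_closed.
move=> /andP[/andP[/andP[_ /eqP dir01] /eqP dir23] dir02] pq.
rewrite -(inord_val p) -(inord_val q).
case: p pq => [[|[|[|[|m]]]] ?] //; case: q => [[|[|[|[|m']]]] ?] //= _;
  rewrite -?dir01 -?dir23; first [done | by rewrite eq_sym].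
Qed.

Section Coloring.
Variable col : Facet -> {set 'I_N}.
Hypothesis col_ok : coloring F col.

Lemma mem_bfac2 b x :
  x \in col (bfac F b (i3 2)) = (x \in col (bfac F b (i3 0))) || (x \in col (bfac F b (i3 1))).
Proof. by case: col_ok => _ <-; rewrite inE. Qed.

Lemma mem_bfac01 b x : x \in col (bfac F b (i3 0)) -> x \in col (bfac F b (i3 1)) -> False.
Proof.
move=> x0 x1; case: col_ok => card_col col_union; case: F_closed => _ [lab_sum _].
have := cardsUI (col (bfac F b (i3 0))) (col (bfac F b (i3 1))).
rewrite col_union !card_col lab_sum => /eqP; rewrite -[X in _ == X]addn0 eqn_add2l cards_eq0.
by move=> /eqP/setP/(_ x); rewrite !inE x0 x1.
Qed.

Definition vpattern x v : pattern :=
  (x \in col (vfac F v (i6 0)), x \in col (vfac F v (i6 1)), x \in col (vfac F v (i6 2))).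

Lemma mem_vfac_model v x p :
  x \in col (vfac F v (i6 (model_facet (vchir F v) p 2))) =
  (x \in col (vfac F v (i6 (model_facet (vchir F v) p 0)))) ||
  (x \in col (vfac F v (i6 (model_facet (vchir F v) p 1)))).
Proof. by rewrite -!bfac_vend_i3 // mem_bfac2. Qed.

Lemma mem_vfac_model01 v x p :
  x \in col (vfac F v (i6 (model_facet (vchir F v) p 0))) ->
  x \in col (vfac F v (i6 (model_facet (vchir F v) p 1))) -> False.
Proof. by rewrite -!bfac_vend_i3 //; apply: mem_bfac01. Qed.

Lemma mem_vfac v x q : q < 6 -> x \in col (vfac F v (i6 q)) = pat_mem (vpattern x v) q.
Proof.
have sum (p : 'I_4) := mem_vfac_model v x p.
have := sum (@Ordinal 4 0 isT); have := sum (@Ordinal 4 2 isT); have := sum (@Ordinal 4 1 isT).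
rewrite /model_facet /model_triple /=; case: (vchir F v) => /= sum5 sum4 sum3.
all: case: q => [|[|[|[|[|[|q]]]]]] // _; rewrite /vpattern //= ?sum5 ?sum3 ?sum4.
all: by case: (x \in col (vfac F v (i6 0))) (x \in col (vfac F v (i6 1))) (x \in col (vfac F v (i6 2)))
  => [] [] [].
Qed.

Lemma vpattern_ok x v : pattern_ok (vpattern x v).
Proof.
have disj p := @mem_vfac_model01 v x p.
rewrite /pattern_ok /vpattern; apply/andP; split; [apply/andP; split|]; apply/negP => /andP[x1 x2].
- by apply: (disj (@Ordinal 4 0 isT)); rewrite /model_facet /=; case: (vchir F v).
- by apply: (disj (@Ordinal 4 2 isT)); rewrite /model_facet /=; case: (vchir F v).
- apply: (disj (@Ordinal 4 3 isT)); rewrite /model_facet /= !mem_vfac //;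
    by case: (vchir F v); rewrite /= ?x1 ?x2 ?orbT.
Qed.

Lemma mem_bfac_vend v p s x :
  x \in col (bfac F (vend F v p).1 s) = pat_mem (vpattern x v) (model_facet (vchir F v) p s).
Proof. by rewrite bfac_vend mem_vfac // model_facet_lt. Qed.

Lemma posbind_vend i j v p :
  posbind F col i j (vend F v p).1 = loc_pos (vchir F v) (vpattern i v) (vpattern j v) p.
Proof. by rewrite /posbind /loc_pos !mem_bfac_vend !i3K. Qed.

Lemma ijbind_vend i j v p :
  ijbind F col i j (vend F v p).1 = loc_ij (vchir F v) (vpattern i v) (vpattern j v) p.
Proof. by rewrite /ijbind /loc_ij /loc_pos !mem_bfac_vend !i3K. Qed.

End Coloring.

Lemma card_vend b e : #|[set vp : Vertex * 'I_4 | vend F vp.1 vp.2 == (b, e)]| = isarc F b.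
Proof. by case: F_closed => _ [_ [card_ends _]]; apply: card_ends. Qed.

Lemma vend_inj v p v' p' : vend F v p = vend F v' p' -> (v, p) = (v', p').
Proof.
move=> same; have : #|[set vp : Vertex * 'I_4 | vend F vp.1 vp.2 == vend F v p]| <= 1.
  by case: (vend F v p) => b e; rewrite card_vend; case: (isarc F b).
by move/card_le1_eqP; apply; rewrite inE ?same.
Qed.

Lemma isarc_vend v p : isarc F (vend F v p).1.
Proof.
have := card_vend (vend F v p).1 (vend F v p).2; rewrite -surjective_pairing.
case: (isarc F _) => // /eqP; rewrite cards_eq0 => /eqP/setP/(_ (v, p)).
by rewrite !inE eqxx.
Qed.

Definition end_site (e : Binding * bool) := [pick vp : Vertex * 'I_4 | vend F vp.1 vp.2 == e].

Lemma end_siteP e v p : end_site e = Some (v, p) -> vend F v p = e.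
Proof. by rewrite /end_site; case: pickP => // x /eqP vx [xvp]; rewrite xvp in vx. Qed.

Lemma end_site_vend v p : end_site (vend F v p) = Some (v, p).
Proof.
rewrite /end_site; case: pickP => [[v' p'] /eqP /= same | /(_ (v, p))]; last by rewrite eqxx.
by rewrite (vend_inj same).
Qed.

Lemma end_site_None b e : end_site (b, e) = None -> ~~ isarc F b.
Proof.
rewrite /end_site; case: pickP => // none _; apply/negP => arc.
have := card_vend b e; rewrite arc => /eqP; rewrite eqn_leq card_gt0 => /andP[_ /set0Pn[vp]].
by rewrite inE none.
Qed.

Definition end_bind (vp : Vertex * 'I_4) := (vend F vp.1 vp.2).1.
Definition is_head (vp : Vertex * 'I_4) := (vend F vp.1 vp.2).2.

Definition other_end (vp : Vertex * 'I_4) : Vertex * 'I_4 := odflt vp (end_site (end_bind vp, ~~ is_head vp)).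

Lemma other_endP vp : vend F (other_end vp).1 (other_end vp).2 = (end_bind vp, ~~ is_head vp).
Proof.
rewrite /other_end; case hd: end_site => [[v p]|] /=; first exact: end_siteP hd.
by have := end_site_None hd; rewrite isarc_vend.
Qed.

Section Circles.
Variables (p1 p2 k : 'I_N).

Definition pig (l : bool) := if l then p2 else p1.

Definition partner col l (vp : Vertex * 'I_4) : 'I_4 :=
  loc_partner (vchir F vp.1) (vpattern col (pig l) vp.1) (vpattern col k vp.1) vp.2.

(* A binding without head is a whole circle. *)
Definition next_bind col l b :=
  if end_site (b, true) is Some vp then (vend F vp.1 (partner col l vp)).1 else b.

(* [(b, l)] stands for the binding [b] seen in F_i /\ F_k /\ F_ik, where [i] is [pig l]. *)
Definition positive col (d : Binding * bool) := posbind F col (pig d.2) k d.1.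

Definition step col (d : Binding * bool) := if positive col d then (next_bind col d.2 d.1, d.2) else d.

Lemma vpattern_pig col l v : vpattern col (pig l) v = if l then vpattern col p2 v else vpattern col p1 v.
Proof. by case: l. Qed.

Section StepPermutation.
Variable col : Facet -> {set 'I_N}.
Hypothesis col_ok : coloring F col.

Lemma posbind_ij i j b : posbind F col i j b -> ijbind F col i j b.
Proof. by rewrite /posbind /ijbind => ->. Qed.

Lemma partnerP l v p : ijbind F col (pig l) k (vend F v p).1 ->
  let q := partner col l (v, p) in
  [/\ q != p, ijbind F col (pig l) k (vend F v q).1, partner col l (v, q) = p,
      (vend F v q).2 != (vend F v p).2
    & posbind F col (pig l) k (vend F v q).1 = posbind F col (pig l) k (vend F v p).1].
Proof.
have := loc_partnerP (vchir F v) p (vpattern_ok col_ok (pig l) v) (vpattern_ok col_ok k v).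
rewrite /partner /= !(ijbind_vend col_ok) !(posbind_vend col_ok) => /implyP partner_ok /partner_ok.
by move=> /and5P[qp ijq /eqP qq dir /andP[/eqP pos _]]; split=> //; apply: vend_dir _ _ _ dir.
Qed.

Lemma partner_uniq l v p q : ijbind F col (pig l) k (vend F v p).1 -> ijbind F col (pig l) k (vend F v q).1 ->
  q != p -> q = partner col l (v, p).
Proof.
have := loc_partnerP (vchir F v) p (vpattern_ok col_ok (pig l) v) (vpattern_ok col_ok k v).
rewrite /partner /= !(ijbind_vend col_ok) => /implyP partner_ok /partner_ok.
move=> /and5P[_ _ _ _ /andP[_ /allP/(_ q (mem_positions q))]] uniq ijq qp.
by apply/eqP; rewrite ijq qp in uniq.
Qed.

Lemma next_bind_vend l b v p : posbind F col (pig l) k b -> vend F v p = (b, true) ->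
  [/\ vend F v (partner col l (v, p)) = (next_bind col l b, false),
      partner col l (v, partner col l (v, p)) = p
    & posbind F col (pig l) k (next_bind col l b)].
Proof.
move=> pos_b vp_b.
have ij_p : ijbind F col (pig l) k (vend F v p).1 by rewrite vp_b posbind_ij.
have [_ _ pp dir pos] := partnerP ij_p.
have -> : next_bind col l b = (vend F v (partner col l (v, p))).1 by rewrite /next_bind -vp_b end_site_vend.
split=> //; last by rewrite pos vp_b.
by move: dir; rewrite vp_b [vend F v _]surjective_pairing; case: (vend F v _).2.
Qed.

Lemma next_bind_circle l b : end_site (b, true) = None -> next_bind col l b = b.
Proof. by rewrite /next_bind => ->. Qed.

Lemma posbind_next l b : posbind F col (pig l) k b -> posbind F col (pig l) k (next_bind col l b).
Proof.
move=> pos_b; case hd: (end_site (b, true)) => [[v p]|]; last by rewrite next_bind_circle.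
by have [] := next_bind_vend pos_b (end_siteP hd).
Qed.

Lemma next_bind_inj l b b' : posbind F col (pig l) k b -> posbind F col (pig l) k b' ->
  next_bind col l b = next_bind col l b' -> b = b'.
Proof.
move=> pos_b pos_b'.
case hd: (end_site (b, true)) => [[v p]|]; case hd': (end_site (b', true)) => [[v' p']|].
- have [nb pp _] := next_bind_vend pos_b (end_siteP hd).
  have [nb' pp' _] := next_bind_vend pos_b' (end_siteP hd') => same.
  move: nb; rewrite same -nb' => /vend_inj [vv' same_partner]; subst v'.
  have pp'' : p = p' by rewrite -pp same_partner pp'.
  subst p'.
  by move: (end_siteP hd) (end_siteP hd') => /= -> [].
- have [nb _ _] := next_bind_vend pos_b (end_siteP hd).
  rewrite (next_bind_circle _ hd') => same; rewrite same in nb.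
  by have := isarc_vend v (partner col l (v, p)); rewrite nb (negbTE (end_site_None hd')).
- have [nb _ _] := next_bind_vend pos_b' (end_siteP hd').
  rewrite (next_bind_circle _ hd) => same; rewrite -same in nb.
  by have := isarc_vend v' (partner col l (v', p')); rewrite nb (negbTE (end_site_None hd)).
- by rewrite !next_bind_circle.
Qed.

Lemma step_inj : injective (step col).
Proof.
move=> [b l] [b' l']; rewrite /step /positive /=.
case pos_b: (posbind _ _ _ _ b); case pos_b': (posbind _ _ _ _ b') => -[same ll']; subst l'.
- by rewrite (next_bind_inj pos_b pos_b' same).
- by move: pos_b'; rewrite -same posbind_next.
- by move: pos_b; rewrite same posbind_next.
- by rewrite same.
Qed.

Definition step_perm : {perm Binding * bool} := perm step_inj.

Lemma step_permE : step_perm =1 step col.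
Proof. by move=> d; rewrite permE. Qed.

Lemma badj_next l b : posbind F col (pig l) k b ->
  next_bind col l b = b \/ badj F col (pig l) k b (next_bind col l b).
Proof.
move=> pos_b; case hd: (end_site (b, true)) => [[v p]|]; last by left; rewrite next_bind_circle.
right; have vp_b := end_siteP hd; have [nb _ pos_nb] := next_bind_vend pos_b vp_b.
rewrite /badj (posbind_ij pos_b) (posbind_ij pos_nb) /=.
apply/existsP; exists v; apply/existsP; exists p; apply/existsP; exists (partner col l (v, p)).
by rewrite vp_b nb !eqxx.
Qed.

Lemma step_perm_pow i b l : positive col (b, l) ->
  [/\ ((step_perm ^+ i)%g (b, l)).2 = l, positive col ((step_perm ^+ i)%g (b, l))
    & connect (badj F col (pig l) k) b ((step_perm ^+ i)%g (b, l)).1].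
Proof.
move=> pos_b; elim: i => [|i [IH1 IH2 IH3]]; first by rewrite expg0 perm1.
rewrite expgSr permM step_permE /step IH2.
move: IH1 IH2 IH3; case: ((step_perm ^+ i)%g (b, l)) => x l' /= -> pos_x conn_x.
split => //; first exact: posbind_next.
by case: (badj_next pos_x) => [-> // | adj]; apply: connect_trans conn_x (connect1 adj).
Qed.

Lemma porbit_step_positive b l d : positive col (b, l) -> d \in porbit step_perm (b, l) ->
  d.2 = l /\ positive col d.
Proof. by move=> pos_b /porbitP[i ->]; have [] := step_perm_pow i pos_b. Qed.

Lemma badj_step l x y : posbind F col (pig l) k x -> badj F col (pig l) k x y ->
  posbind F col (pig l) k y /\ [\/ y = x, step col (x, l) = (y, l) | step col (y, l) = (x, l)].
Proof.
move=> pos_x /andP[/andP[ij_x ij_y] /existsP[v /existsP[p /existsP[q /andP[/eqP vp_x /eqP vq_y]]]]].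
have [qp | qp] := eqVneq q p; first by subst q; rewrite -vq_y vp_x; split=> //; constructor 1.
rewrite -vp_x in ij_x; rewrite -vq_y in ij_y.
have q_partner := partner_uniq ij_x ij_y qp.
have [_ _ pp dir pos] := partnerP ij_x; rewrite -q_partner in pp dir pos.
have pos_y : posbind F col (pig l) k y by rewrite -vq_y pos vp_x.
split => //; case dir_p: (vend F v p).2.
- have vp_xt : vend F v p = (x, true) by rewrite [LHS]surjective_pairing vp_x dir_p.
  have [/(congr1 fst) /= nb _ _] := next_bind_vend pos_x vp_xt; rewrite -q_partner vq_y in nb.
  by constructor 2; rewrite /step /positive /= pos_x nb.
- have vq_yt : vend F v q = (y, true).
    by rewrite [LHS]surjective_pairing vq_y; move: dir; rewrite dir_p; case: (vend F v q).2.
  have [/(congr1 fst) /= nb _ _] := next_bind_vend pos_y vq_yt; rewrite pp vp_x in nb.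
  by constructor 3; rewrite /step /positive /= pos_y nb.
Qed.

Lemma porbit_badj l b x y : positive col (b, l) -> (x, l) \in porbit step_perm (b, l) ->
  badj F col (pig l) k x y -> (y, l) \in porbit step_perm (b, l).
Proof.
move=> pos_b orb_x adj; have [_ pos_x] := porbit_step_positive pos_b orb_x.
have [_ cases] := badj_step pos_x adj.
have <- : porbit step_perm (x, l) = porbit step_perm (b, l) by apply/eqP; rewrite eq_porbit_mem.
case: cases => [-> | e | e]; first exact: porbit_id.
- by have := mem_porbit step_perm 1 (x, l); rewrite expg1 step_permE e.
- by rewrite porbit_sym; have := mem_porbit step_perm 1 (y, l); rewrite expg1 step_permE e.
Qed.

Lemma component_porbit l b : positive col (b, l) ->
  [set b' | connect (badj F col (pig l) k) b b'] = [set b' | (b', l) \in porbit step_perm (b, l)].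
Proof.
move=> pos_b; apply/setP => y; rewrite !inE; apply/idP/idP => [/connectP[pth] | ]; last first.
  by move/porbitP => [i e]; have [_ _] := step_perm_pow i pos_b; rewrite -e.
elim/last_ind: pth y => [|pth z IH] y; first by move=> _ ->; apply: porbit_id.
rewrite rcons_path last_rcons => /andP[pth_ok adj] ->.
exact: porbit_badj (IH _ pth_ok erefl) adj.
Qed.

Lemma card_porbits_positive l :
  #|porbit step_perm @: [set d | positive col d & d.2 == l]| = theta_pos F col (pig l) k.
Proof.
pose tag (X : {set Binding}) := [set (x, l) | x in X].
have pair_inj : injective (pair^~ l : Binding -> Binding * bool) by move=> ? ? [].
have tag_inj : injective tag.
  move=> X Y same; apply/setP => x.
  by rewrite -(mem_imset X x pair_inj) -/(tag X) same (mem_imset _ _ pair_inj).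
have -> : [set d | positive col d & d.2 == l] = (pair^~ l) @: [set b | posbind F col (pig l) k b].
  apply/setP => -[b l']; rewrite inE /positive /=.
  apply/idP/imsetP => [/andP[pos /eqP ll'] | [b' pos' [-> ->]]]; first by subst l'; exists b; rewrite ?inE.
  by rewrite inE in pos'; rewrite pos' eqxx.
have tag_component b : posbind F col (pig l) k b ->
    tag [set b' | connect (badj F col (pig l) k) b b'] = porbit step_perm (b, l).
  move=> pos_b; rewrite component_porbit //; apply/setP => -[x l'].
  apply/imsetP/idP => [[y] | orb_x]; first by rewrite inE => orb_y [-> ->].
  have [/= ll' _] := porbit_step_positive pos_b orb_x; subst l'.
  by exists x; rewrite ?inE.
rewrite /theta_pos -(card_imset _ tag_inj) -!imset_comp.
by apply: eq_card => X; apply/imsetP/imsetP => -[b]; rewrite inE => pos_b ->;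
  exists b; rewrite ?inE //= tag_component.
Qed.

Lemma card_porbits_step : #|porbits step_perm| =
  theta_pos F col p1 k + theta_pos F col p2 k + #|~: [set d | positive col d]|.
Proof.
rewrite (card_porbits_fixed (A := [set d | positive col d])); last first.
  by move=> d; rewrite !inE => /negbTE npos; rewrite step_permE /step npos.
rewrite -(card_porbits_positive false) -(card_porbits_positive true).
have -> : [set d | positive col d] =
    [set d | positive col d & d.2 == false] :|: [set d | positive col d & d.2 == true].
  by apply/setP => -[b []]; rewrite !inE ?andbT ?andbF ?orbF.
rewrite imsetU cardsU (_ : _ :&: _ = set0) ?cards0 ?subn0 //.
apply/setP => X; rewrite !inE; apply/andP => -[/imsetP[[b l] + ->] /imsetP[d]].
rewrite !inE /= => /andP[pos_b /eqP ll] /andP[_ /eqP dl] orb_d; subst l.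
have orb_d' : d \in porbit step_perm (b, false) by rewrite orb_d porbit_id.
by have [] := porbit_step_positive pos_b orb_d'; rewrite dl.
Qed.

End StepPermutation.

Section Kempe.
Variables (c c' : Facet -> {set 'I_N}) (S : {set Facet}).
Hypotheses (c_ok : coloring F c) (c'_ok : coloring F c').
Hypothesis S_closed : closed_subsurface F c p1 p2 S.
Hypothesis c'E : forall f, c' f = if f \in S then swap_color p1 p2 (c f) else c f.
Hypotheses (p12 : p1 != p2) (kp1 : k != p1) (kp2 : k != p2).

Definition moved v := [exists q : 'I_6, vfac F v q \in S].
Definition swapped b := [exists s : 'I_3, bfac F b s \in S].
Definition end_moved e := [exists vp : Vertex * 'I_4, (vend F vp.1 vp.2 == e) && moved vp.1].

(* Bindings positive for both (p1, k) and (p2, k). *)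
Definition cross b :=
  [&& p1 \in c (bfac F b (i3 0)), p2 \in c (bfac F b (i3 0)) & k \in c (bfac F b (i3 1))].

Definition cross_head b := cross b && end_moved (b, true).
Definition cross_tail b := cross b && end_moved (b, false).

Lemma swp_pig l : swp p1 p2 (pig l) = pig (~~ l).
Proof. by case: l; rewrite /swp /pig /= ?eqxx // eq_sym (negbTE p12). Qed.

Lemma swp_k : swp p1 p2 k = k.
Proof. by rewrite /swp (negbTE kp1) (negbTE kp2). Qed.

Lemma swp_notin_Fij f x : ~~ inFij c p1 p2 f -> (swp p1 p2 x \in c f) = (x \in c f).
Proof.
rewrite /inFij negbK /swp => /eqP same.
by have [-> | _] := eqVneq x p1; [rewrite same | have [-> | _] := eqVneq x p2].
Qed.

Lemma S_inFij f : f \in S -> inFij c p1 p2 f.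
Proof. by case: S_closed => + _; apply. Qed.

Lemma mem_bfac_kempe b s x :
  x \in c' (bfac F b s) = ((if swapped b then swp p1 p2 x else x) \in c (bfac F b s)).
Proof.
rewrite c'E; case S_bs: (bfac F b s \in S).
  by rewrite inE; have -> : swapped b by apply/existsP; exists s.
case/boolP: (swapped b) => // /existsP[s' S_bs'].
rewrite swp_notin_Fij //; apply/negP => Fij_bs.
suff adj : fadj F c p1 p2 (bfac F b s') (bfac F b s) by have := (proj2 S_closed) _ _ adj; rewrite S_bs' S_bs.
rewrite /fadj (S_inFij S_bs') Fij_bs /=; apply/existsP; exists b.
by apply/existsP; exists s'; apply/existsP; exists s; rewrite !eqxx.
Qed.

Lemma positive_kempe d : positive c' (xor_snd swapped d) = positive c d.
Proof.
case: d => b l; rewrite /positive /posbind /xor_snd /= !mem_bfac_kempe.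
by case: (swapped b); rewrite ?addbT ?addbF ?swp_k ?swp_pig ?negbK.
Qed.

Lemma vfac_in_S v q : q < 6 -> moved v ->
  (vfac F v (i6 q) \in S) = loc_inFij (vpattern c p1 v) (vpattern c p2 v) q.
Proof.
move=> q6 /existsP[q0 S_q0].
pose ms := [seq vfac F v (i6 r) \in S | r <- iota 0 6].
have msE r : r < 6 -> nth false ms r = (vfac F v (i6 r) \in S).
  by move=> r6; rewrite (nth_map 0) ?size_iota // nth_iota.
have Fij_vfac r : r < 6 -> inFij c p1 p2 (vfac F v (i6 r)) = loc_inFij (vpattern c p1 v) (vpattern c p2 v) r.
  by move=> r6; rewrite /inFij /loc_inFij !(mem_vfac c_ok).
have := loc_Fij_connectedP (vchir F v) (vpattern_ok c_ok p1 v) (vpattern_ok c_ok p2 v) (_ : size ms = 6).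
rewrite size_map size_iota => /(_ erefl) /implyP conn.
suff /allP/(_ q) :
    all (fun r => nth false ms r == loc_inFij (vpattern c p1 v) (vpattern c p2 v) r) (iota 0 6).
  by rewrite mem_iota msE // => /(_ q6) /eqP.
apply: conn; apply/and3P; split.
- apply/allP => p _; apply/allP => s; rewrite mem_iota => s3; apply/allP => s'; rewrite mem_iota => s'3.
  rewrite !msE ?model_facet_lt // -!Fij_vfac ?model_facet_lt //.
  apply/implyP => /and3P[Fij_s Fij_s' S_s]; rewrite -!bfac_vend_i3 // in Fij_s Fij_s' S_s *.
  suff adj : fadj F c p1 p2 (bfac F (vend F v p).1 (i3 s)) (bfac F (vend F v p).1 (i3 s')).
    by rewrite -((proj2 S_closed) _ _ adj).
  rewrite /fadj Fij_s Fij_s' /=; apply/existsP; exists (vend F v p).1.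
  by apply/existsP; exists (i3 s); apply/existsP; exists (i3 s'); rewrite !eqxx.
- apply/allP => r; rewrite mem_iota => r6; rewrite msE // -Fij_vfac //.
  by apply/implyP; apply: S_inFij.
- by apply/hasP; exists (val q0); rewrite ?mem_iota ?msE /= ?ltn_ord // /i6 inord_val.
Qed.

Lemma mem_vfac_kempe v q x : q < 6 ->
  x \in c' (vfac F v (i6 q)) = ((if moved v then swp p1 p2 x else x) \in c (vfac F v (i6 q))).
Proof.
move=> q6; rewrite c'E; case S_q: (vfac F v (i6 q) \in S).
  by rewrite inE; have -> : moved v by apply/existsP; exists (i6 q).
case/boolP: (moved v) => // mv.
by rewrite swp_notin_Fij // /inFij !(mem_vfac c_ok) // -/(loc_inFij _ _ _) -vfac_in_S // S_q.
Qed.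

Lemma vpattern_kempe l v : vpattern c' (pig l) v = vpattern c (pig (l (+) moved v)) v.
Proof. by rewrite /vpattern !mem_vfac_kempe //; case: (moved v); rewrite ?addbT ?addbF ?swp_pig. Qed.

Lemma vpattern_kempe_k v : vpattern c' k v = vpattern c k v.
Proof. by rewrite /vpattern !mem_vfac_kempe //; case: (moved v); rewrite ?swp_k. Qed.

Lemma swapped_vend v p :
  swapped (vend F v p).1 = moved v && loc_touchFij (vchir F v) (vpattern c p1 v) (vpattern c p2 v) p.
Proof.
case/boolP: (moved v) => mv /=; last first.
  apply/negbTE/existsP => -[s]; rewrite bfac_vend => S_s.
  by case/negP: mv; apply/existsP; eexists; exact: S_s.
apply/existsP/hasP => [[s] | [s]].
  by rewrite bfac_vend vfac_in_S ?model_facet_lt // => Fij_s; exists (val s); rewrite ?mem_iota /= ?ltn_ord.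
rewrite mem_iota add0n => /andP[_ s3].
by rewrite -vfac_in_S ?model_facet_lt // -bfac_vend_i3 // => S_s; exists (i3 s).
Qed.

Lemma cross_vend v p :
  cross (vend F v p).1 = loc_cross (vchir F v) (vpattern c p1 v) (vpattern c p2 v) (vpattern c k v) p.
Proof. by rewrite /cross /loc_cross !(mem_bfac_vend c_ok) !i3K. Qed.

Lemma cross_posbind l b : cross b -> posbind F c (pig l) k b.
Proof. by case/and3P => b1 b2 bk; case: l; rewrite /posbind /= ?b1 ?b2 bk. Qed.

Lemma end_moved_vend v p : end_moved (vend F v p) = moved v.
Proof.
apply/existsP/idP => [[[v' p'] /andP[/eqP same mv']] | mv]; first by case: (vend_inj same) => <-.
by exists (v, p); rewrite eqxx.
Qed.

Lemma end_moved_circle b e : ~~ isarc F b -> end_moved (b, e) = false.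
Proof.
move=> circle; apply/negbTE/existsP => -[[v p] /andP[/eqP vp_b _]].
by have := isarc_vend v p; rewrite vp_b (negbTE circle).
Qed.

Lemma step_kempe_vend l b v p : positive c (b, l) -> vend F v p = (b, true) ->
  xor_snd swapped (step c' (xor_snd swapped (b, l))) =
  xor_snd cross_tail (step c (xor_snd cross_head (b, l))).
Proof.
move=> pos_b vp_b; rewrite {1}/step positive_kempe pos_b /xor_snd /step /positive /=.
have pos1 : posbind F c (pig (l (+) cross_head b)) k b.
  by case/boolP: (cross_head b) => [/andP[/cross_posbind //] | _]; rewrite addbF.
rewrite pos1 /=; have [nb _ _] := next_bind_vend c_ok pos1 vp_b.
have next1 : next_bind c (l (+) cross_head b) b = (vend F v (partner c (l (+) cross_head b) (v, p))).1.
  by rewrite nb.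
have next3 l3 : next_bind c' l3 b = (vend F v (partner c' l3 (v, p))).1.
  by rewrite /next_bind -vp_b end_site_vend.
have tail1 : cross_tail (next_bind c (l (+) cross_head b) b) =
    loc_cross (vchir F v) (vpattern c p1 v) (vpattern c p2 v) (vpattern c k v)
      (partner c (l (+) cross_head b) (v, p))
    && moved v.
  by rewrite /cross_tail -nb end_moved_vend next1 cross_vend.
have head_b :
    cross_head b = loc_cross (vchir F v) (vpattern c p1 v) (vpattern c p2 v) (vpattern c k v) p && moved v.
  by rewrite /cross_head -vp_b end_moved_vend -cross_vend vp_b.
have swp_b : swapped b = moved v && loc_touchFij (vchir F v) (vpattern c p1 v) (vpattern c p2 v) p.
  by rewrite -swapped_vend vp_b.
rewrite tail1 next3 next1 swapped_vend head_b swp_b /partner /= vpattern_kempe vpattern_kempe_k !vpattern_pig.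
have := loc_step_kempeP (vchir F v) (moved v) l p
  (vpattern_ok c_ok p1 v) (vpattern_ok c_ok p2 v) (vpattern_ok c_ok k v).
rewrite /loc_step_kempe -vpattern_pig -(posbind_vend c_ok) vp_b [posbind _ _ _ _ _]pos_b /=.
by move=> /andP[/eqP <- /eqP <-]; rewrite -!addbA addbb addbF.
Qed.

Lemma step_kempe d :
  xor_snd swapped (step c' (xor_snd swapped d)) = xor_snd cross_tail (step c (xor_snd cross_head d)).
Proof.
case: d => b l; case/boolP: (positive c (b, l)) => [pos_b | npos_b].
  case hd: (end_site (b, true)) => [[v p]|]; first exact: step_kempe_vend pos_b (end_siteP hd).
  have circle := end_site_None hd.
  rewrite /step positive_kempe pos_b /xor_snd /cross_head /cross_tail /= end_moved_circle // andbF addbF.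
  by rewrite [positive _ _]pos_b !next_bind_circle // end_moved_circle // andbF addbF -addbA addbb addbF.
have ncross : cross b = false by apply: contraNF npos_b => /(cross_posbind l).
rewrite /step positive_kempe (negbTE npos_b) /xor_snd /cross_head /cross_tail /= ncross /= addbF.
by rewrite [positive _ _](negbTE npos_b) /= ncross addbF -addbA addbb addbF.
Qed.

Lemma step_perm_kempe : (xor_perm swapped * step_perm c'_ok * xor_perm swapped)%g =
  (xor_perm cross_head * step_perm c_ok * xor_perm cross_tail)%g.
Proof. by apply/permP => d; rewrite !permM !xor_permE !step_permE step_kempe. Qed.

Lemma bfac_in_S_moved v p s : bfac F (vend F v p).1 s \in S -> moved v.
Proof. by rewrite bfac_vend => S_s; apply/existsP; eexists; exact: S_s. Qed.

Lemma bfac_in_S v p s :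
  moved v -> inFij c p1 p2 (bfac F (vend F v p).1 s) -> bfac F (vend F v p).1 s \in S.
Proof.
by move=> mv; rewrite bfac_vend vfac_in_S ?model_facet_lt // /inFij !(mem_vfac c_ok) ?model_facet_lt.
Qed.

Lemma even_moved_ends : ~~ odd #|[set vp | moved vp.1 && posbind F c p1 k (end_bind vp)]|.
Proof.
apply: (@even_card_involution _ _ (fun vp => (vp.1, partner c false vp))) => -[v p];
  rewrite inE /end_bind /= => /andP[mv pos];
  have [qp _ pp _ pos_q] := partnerP c_ok (l := false) (posbind_ij pos).
- by rewrite inE /end_bind /= mv pos_q.
- by rewrite pp.
- by rewrite xpair_eqE eqxx.
Qed.

Lemma even_moved_plain_ends :
  ~~ odd #|[set vp | [&& moved vp.1, posbind F c p1 k (end_bind vp) & ~~ cross (end_bind vp)]]|.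
Proof.
apply: (@even_card_involution _ _ other_end) => vp; rewrite inE => /and3P[mv pos ncross].
- have same_bind : end_bind (other_end vp) = end_bind vp by rewrite /end_bind other_endP.
  rewrite inE same_bind pos ncross !andbT; apply: (@bfac_in_S_moved _ (other_end vp).2 (i3 0)).
  rewrite -/(end_bind _) same_bind; apply: bfac_in_S => //; move: pos ncross.
  by rewrite /posbind /cross /inFij; case/andP => -> ->; rewrite andbT /= => ->.
- have vpK : vend F (other_end (other_end vp)).1 (other_end (other_end vp)).2 = vend F vp.1 vp.2.
    by rewrite !other_endP /end_bind /is_head other_endP /= negbK -surjective_pairing.
  by have := vend_inj vpK; rewrite -!surjective_pairing.
- apply/eqP => fixed; have := other_endP vp; rewrite fixed /end_bind /is_head.
  by case: (vend F vp.1 vp.2) => ? [].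
Qed.

Lemma card_cross_ends e :
  #|[set vp | [&& moved vp.1, cross (end_bind vp) & is_head vp == e]]| =
  #|[set b | cross b && end_moved (b, e)]|.
Proof.
have -> : [set b | cross b && end_moved (b, e)] =
    end_bind @: [set vp | [&& moved vp.1, cross (end_bind vp) & is_head vp == e]].
  apply/setP => b; rewrite inE; apply/andP/imsetP => [[cross_b /existsP[vp /andP[/eqP vp_b mv]]] | [vp]].
    by exists vp; rewrite /end_bind ?vp_b // inE /end_bind /is_head mv vp_b cross_b /=.
  rewrite inE => /and3P[mv cross_b /eqP dir] ->; split => //; apply/existsP; exists vp.
  by rewrite /end_bind -dir -surjective_pairing eqxx.
apply/esym/card_in_imset => -[v p] [v' p']; rewrite !inE /end_bind /is_head /=.
move=> /and3P[_ _ /eqP dir] /and3P[_ _ /eqP dir'] same.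
by apply: vend_inj; rewrite [LHS]surjective_pairing [RHS]surjective_pairing same dir dir'.
Qed.

Lemma odd_cross_head_tail : odd #|[set b | cross_head b]| = odd #|[set b | cross_tail b]|.
Proof.
pose A := [set vp | moved vp.1 && posbind F c p1 k (end_bind vp)].
pose E := [set vp | moved vp.1 && cross (end_bind vp)].
have := cardsID E A; have -> : A :&: E = E.
  apply/setP => vp; rewrite !inE; case: (moved _) => //=.
  by case/boolP: (cross _) => [/(@cross_posbind false) -> | _]; rewrite ?andbF.
have -> : A :\: E = [set vp | [&& moved vp.1, posbind F c p1 k (end_bind vp) & ~~ cross (end_bind vp)]].
  by apply/setP => vp; rewrite !inE; case: (moved _); rewrite //= andbC.
have := cardsID [set vp | is_head vp] E.
have -> : E :&: [set vp | is_head vp] = [set vp | [&& moved vp.1, cross (end_bind vp) & is_head vp == true]].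
  by apply/setP => vp; rewrite !inE eqb_id andbA.
have -> : E :\: [set vp | is_head vp] = [set vp | [&& moved vp.1, cross (end_bind vp) & is_head vp == false]].
  by apply/setP => vp; rewrite !inE eqbF_neg [RHS]andbA andbC.
rewrite !card_cross_ends => <- /(congr1 odd).
rewrite !oddD (negbTE even_moved_plain_ends) (negbTE even_moved_ends) addbF /cross_head /cross_tail.
by case: (odd _); case: (odd _).
Qed.

Lemma odd_step_perm_kempe : odd_perm (step_perm c'_ok) = odd_perm (step_perm c_ok).
Proof.
have := congr1 (@odd_perm _) step_perm_kempe.
rewrite !odd_permM (odd_xor_perm swapped) (odd_xor_perm cross_head) (odd_xor_perm cross_tail).
rewrite odd_cross_head_tail.
by case: (odd_perm (step_perm c'_ok)) (odd_perm (step_perm c_ok)) (odd #|[set b | swapped b]|)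
  (odd #|[set b | cross_tail b]|) => [] [] [] [].
Qed.

Lemma card_nonpositive_kempe : #|~: [set d | positive c' d]| = #|~: [set d | positive c d]|.
Proof.
rewrite -(card_preimset _ (inv_inj (xor_sndK swapped))).
by apply: eq_card => d; rewrite !inE positive_kempe.
Qed.

Lemma odd_theta_kempe :
  odd (theta_pos F c' p1 k + theta_pos F c' p2 k) = odd (theta_pos F c p1 k + theta_pos F c p2 k).
Proof.
have := odd_step_perm_kempe; rewrite /odd_perm => /addbI.
rewrite (card_porbits_step c_ok) (card_porbits_step c'_ok) card_nonpositive_kempe !oddD.
by move/addIb.
Qed.

End Kempe.
End Circles.

End Foam.

Theorem lemma2p7 (N : nat) (Facet Binding Vertex : finType)
  (F : foam Facet Binding Vertex) (c c' : Facet -> {set 'I_N})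
  (p1 p2 k : 'I_N) :
  val p1 = 0 -> val p2 = 1 -> 2 <= val k ->
  closed_foam F N -> coloring F c -> coloring F c' ->
  kempe_move F p1 p2 c c' ->
  theta_pos F c p1 k + theta_pos F c p2 k
    = theta_pos F c' p1 k + theta_pos F c' p2 k %[mod 2].
Proof.
move=> val_p1 val_p2 k_ge2 F_closed c_ok c'_ok [S [S_closed c'E]].
have p12 : p1 != p2 by rewrite -val_eqE val_p1 val_p2.
have kp1 : k != p1 by rewrite -val_eqE val_p1 -lt0n (leq_trans _ k_ge2).
have kp2 : k != p2 by rewrite -val_eqE val_p2 neq_ltn (leq_trans _ k_ge2) ?orbT.
by rewrite !modn2 (odd_theta_kempe F_closed c_ok c'_ok S_closed c'E p12 kp1 kp2).
Qed.
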